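(* Let $0<c<1$, let $K=\mathbb{C}(\lambda,\sqrt{1-c^2\lambda})$ and consider the Legendre elliptic curve $L_\lambda: Y^2=X(X-1)(X-\lambda)$ over $K$. Then the point $$B(\lambda)=\left(\frac{(1-c^2)\lambda}{1-c^2\lambda},\ \frac{c\sqrt{1-c^2}\,\lambda(1-\lambda)}{(1-c^2\lambda)\sqrt{1-c^2\lambda}}\right)\in L_\lambda(K)$$ (the billiard section) is not a torsion point of $L_\lambda(K)$.
   Context: This section encodes the billiard map of the elliptical billiard $x^2+y^2/(1-c^2)=1$ (foci $(\pm c,0)$) on the caustic with parameter $s=c^2\lambda$, transported to the Legendre model. *)

From HB Require Import structures.
From mathcomp Require Import all_boot all_order all_algebra.
From mathcomp Require Import fraction.
From mathcomp Require Import complex.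
From mathcomp Require Import reals.
Set Implicit Arguments. Unset Strict Implicit. Unset Printing Implicit Defensive.
Import Order.TTheory GRing.Theory Num.Theory.
Local Open Scope ring_scope.

(* Points of a Weierstrass curve y^2 = x^3 + a2 x^2 + a4 x + a6 over a field F:
   None is the point at infinity O, Some (x, y) an affine point. *)
Definition ec_point (F : fieldType) := option (F * F).

Definition on_weierstrass (F : fieldType) (a2 a4 a6 : F) (P : ec_point F) : Prop :=
  match P with
  | None => True
  | Some (x, y) => y ^+ 2 = x ^+ 3 + a2 * x ^+ 2 + a4 * x + a6
  end.

(* The chord-tangent group law (valid in characteristic <> 2). *)
Definition ec_add (F : fieldType) (a2 a4 : F) (P Q : ec_point F) : ec_point F :=
  match P, Q with
  | None, _ => Q
  | _, None => P
  | Some (x1, y1), Some (x2, y2) =>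
      if x1 == x2 then
        if y1 == - y2 then None
        else
          let m := (3 * x1 ^+ 2 + 2 * a2 * x1 + a4) / (2 * y1) in
          let x3 := m ^+ 2 - a2 - x1 - x2 in
          Some (x3, - (y1 + m * (x3 - x1)))
      else
        let m := (y2 - y1) / (x2 - x1) in
        let x3 := m ^+ 2 - a2 - x1 - x2 in
        Some (x3, - (y1 + m * (x3 - x1)))
  end.

Definition ec_mul (F : fieldType) (a2 a4 : F) (n : nat) (P : ec_point F) : ec_point F :=
  iter n (ec_add a2 a4 P) None.

Definition ec_torsion (F : fieldType) (a2 a4 : F) (P : ec_point F) : Prop :=
  exists n : nat, (0 < n)%N /\ ec_mul a2 a4 n P = None.

(* The Legendre curve L_lam : Y^2 = X (X - 1) (X - lam)
   = X^3 - (1 + lam) X^2 + lam X. *)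
Definition legendre_on (F : fieldType) (lam : F) (P : ec_point F) : Prop :=
  on_weierstrass (- (1 + lam)) lam 0 P.
Definition legendre_torsion (F : fieldType) (lam : F) (P : ec_point F) : Prop :=
  ec_torsion (- (1 + lam)) lam P.

(* The field K = C(lam, sqrt(1 - c^2 lam)), with C = R[i] for a real field R.
   Put t := sqrt(1 - c^2 lam); then lam = (1 - t^2)/c^2 and K = C(t),
   the rational function field in the indeterminate t. *)
Section BilliardField.
Variable R : realType.
Local Open Scope complex_scope.

Definition Kfield := {fraction {poly R[i]}}.

Definition Kconst (z : R[i]) : Kfield := @FracField.tofrac {poly R[i]} (z%:P).

Definition Kt : Kfield := @FracField.tofrac {poly R[i]} 'X.

Definition Klam (c : R) : Kfield := (1 - Kt ^+ 2) / Kconst ((c ^+ 2)%:C).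

Definition billiardB (c : R) : ec_point Kfield :=
  let lam := Klam c in
  let cc := Kconst (c%:C) in
  let s := Kconst ((Num.sqrt (1 - c ^+ 2))%:C) in
  Some ((1 - cc ^+ 2) * lam / (1 - cc ^+ 2 * lam),
        cc * s * lam * (1 - lam) / ((1 - cc ^+ 2 * lam) * Kt)).
End BilliardField.

From mathcomp Require Import all_boot all_order all_algebra.
From mathcomp Require Import fraction complex reals.
From mathcomp Require Import ring.
Import Order.TTheory GRing.Theory Num.Theory.
Local Open Scope ring_scope.
Set Implicit Arguments. Unset Strict Implicit.

(* The proof reduces B at the place t = 0, i.e. lam = 1/c^2.  Rescaling the
   coordinates by (x, y) |-> (t^2 x, t^3 y) identifies L with the curve
   y^2 = x^3 + t^2 a2 x^2 + t^4 a4 x, whose coefficients vanish at t = 0, so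
   its reduction is the cusp y^2 = x^3.  On the cusp the parameter
   a |-> (a^-2, - a^-3) turns the chord-tangent law into addition.  The
   rescaled section is regular at t = 0 and reduces to the parameter c / s,
   s = sqrt(1 - c^2); since reduction respects the group law, n B reduces to
   the parameter n c / s, which is nonzero in characteristic 0, so n B <> O. *)

Section ValueAtZero.
Context {F : fieldType}.
Local Notation K := {fraction {poly F}}.
Local Notation tf := (@FracField.tofrac {poly F}).

Definition value_at0 (f : K) (a : F) : Prop :=
  exists p q : {poly F}, q.[0] != 0 /\ f = tf p / tf q /\ a = p.[0] / q.[0].

Lemma tofrac_neq0 (q : {poly F}) : q.[0] != 0 -> tf q != 0.
Proof. by apply: contraNneq => /eqP; rewrite tofrac_eq0 => /eqP ->; rewrite horner0. Qed.

Lemma value_at0_poly (p : {poly F}) : value_at0 (tf p) p.[0].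
Proof. by exists p, 1; rewrite hornerC tofrac1 !divr1 oner_neq0. Qed.

Lemma value_at0C (z : F) : value_at0 (tf z%:P) z.
Proof. by have := value_at0_poly z%:P; rewrite hornerC. Qed.

Lemma value_at0_t : value_at0 (tf 'X) 0.
Proof. by have := value_at0_poly 'X; rewrite hornerX. Qed.

Lemma value_at0_nat (n : nat) : value_at0 n%:R n%:R.
Proof. by have := value_at0C n%:R; rewrite polyC_natr rmorph_nat. Qed.

Lemma value_at0_1 : value_at0 1 1.
Proof. by have := value_at0_nat 1. Qed.

Lemma value_at0D f g a b : value_at0 f a -> value_at0 g b -> value_at0 (f + g) (a + b).
Proof.
move=> [p [q [q0 [-> ->]]]] [p' [q' [q0' [-> ->]]]].
exists (p * q' + p' * q), (q * q'); rewrite hornerM mulf_neq0 //.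
by rewrite tofracD !tofracM hornerD !hornerM !addf_div // !tofrac_neq0.
Qed.

Lemma value_at0M f g a b : value_at0 f a -> value_at0 g b -> value_at0 (f * g) (a * b).
Proof.
move=> [p [q [q0 [-> ->]]]] [p' [q' [q0' [-> ->]]]].
exists (p * p'), (q * q'); rewrite hornerM mulf_neq0 //.
by rewrite !tofracM !hornerM !mulf_div.
Qed.

Lemma value_at0N f a : value_at0 f a -> value_at0 (- f) (- a).
Proof.
by move=> [p [q [q0 [-> ->]]]]; exists (- p), q; rewrite tofracN hornerN !mulNr.
Qed.

Lemma value_at0B f g a b : value_at0 f a -> value_at0 g b -> value_at0 (f - g) (a - b).
Proof. by move=> vf /value_at0N; apply: value_at0D. Qed.

Lemma value_at0X f a n : value_at0 f a -> value_at0 (f ^+ n) (a ^+ n).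
Proof.
move=> vf; elim: n => [|n IH]; first by rewrite !expr0; apply: value_at0_1.
by rewrite !exprS; apply: value_at0M.
Qed.

Lemma value_at0V f a : a != 0 -> value_at0 f a -> value_at0 f^-1 a^-1.
Proof.
move=> a0 [p [q [q0 [-> Ea]]]].
have p0 : p.[0] != 0 by apply: contraNneq a0 => p0; rewrite Ea p0 mul0r.
by exists q, p; rewrite Ea !invf_div.
Qed.

Lemma value_at0_uniq f a b : value_at0 f a -> value_at0 f b -> a = b.
Proof.
move=> [p [q [q0 [-> ->]]]] [p' [q' [q0' [/eqP E ->]]]].
apply/eqP; rewrite eqr_div //.
move: E; rewrite eqr_div ?tofrac_neq0 // -!tofracM tofrac_eq => /eqP E.
by rewrite -!hornerM E.
Qed.

Lemma value_at0_neq0 f a : a != 0 -> value_at0 f a -> f != 0.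
Proof.
move=> a0 vf; apply: contraNneq a0 => f0.
by rewrite (value_at0_uniq vf (_ : value_at0 f 0)) // f0; apply: value_at0_nat 0.
Qed.

End ValueAtZero.

Section WeightedScaling.
Variable F : fieldType.

(* The isomorphism (x, y) |-> (x / u^2, y / u^3) from the curve with
   coefficients (u^2 a2, u^4 a4) onto the curve with coefficients (a2, a4). *)
Definition ec_scale (u : F) (P : ec_point F) : ec_point F :=
  if P is Some (x, y) then Some (x / u ^+ 2, y / u ^+ 3) else None.

Variable u : F.
Hypothesis u_neq0 : u != 0.

(* Scaling a slope m of the model by u^-1 reproduces the third intersection point. *)
Lemma scale_third_point (a2 x1 x2 y1 m : F) :
  let x3 := m ^+ 2 - u ^+ 2 * a2 - x1 - x2 in
  let x3' := (m / u) ^+ 2 - a2 - x1 / u ^+ 2 - x2 / u ^+ 2 in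
  (x3', - (y1 / u ^+ 3 + m / u * (x3' - x1 / u ^+ 2)))
  = (x3 / u ^+ 2, - (y1 + m * (x3 - x1)) / u ^+ 3).
Proof. by congr pair; field; rewrite u_neq0. Qed.

Lemma ec_add_scale (a2 a4 : F) (P Q : ec_point F) :
  ec_add a2 a4 (ec_scale u P) (ec_scale u Q)
  = ec_scale u (ec_add (u ^+ 2 * a2) (u ^+ 4 * a4) P Q).
Proof.
case: P => [[x1 y1]|]; case: Q => [[x2 y2]|] //=.
have u2 : u ^+ 2 != 0 by rewrite expf_neq0.
have u3 : u ^+ 3 != 0 by rewrite expf_neq0.
rewrite (can_eq (divfK u2)) -mulNr (can_eq (divfK u3)).
have [ex|nx] := eqVneq x1 x2; last first.
  have dx : x2 - x1 != 0 by rewrite subr_eq0 eq_sym.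
  have -> : (y2 / u ^+ 3 - y1 / u ^+ 3) / (x2 / u ^+ 2 - x1 / u ^+ 2)
          = (y2 - y1) / (x2 - x1) / u by field; rewrite u_neq0 dx.
  by rewrite scale_third_point.
case: (y1 == - y2) => //.
have -> : (3 * (x1 / u ^+ 2) ^+ 2 + 2 * a2 * (x1 / u ^+ 2) + a4) / (2 * (y1 / u ^+ 3))
        = (3 * x1 ^+ 2 + 2 * (u ^+ 2 * a2) * x1 + u ^+ 4 * a4) / (2 * y1) / u.
  have [dy0|dy] := eqVneq (2 * y1) 0.
    by rewrite [2 * (y1 / _)]mulrA dy0 mul0r !invr0 !mulr0 mul0r.
  by field; move: dy; rewrite mulf_eq0 negb_or u_neq0 andbC.
by rewrite scale_third_point.
Qed.

Lemma ec_mul_scale (a2 a4 : F) (n : nat) (P : ec_point F) :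
  ec_mul a2 a4 n (ec_scale u P) = ec_scale u (ec_mul (u ^+ 2 * a2) (u ^+ 4 * a4) n P).
Proof. by elim: n => [|n IH] //; rewrite /ec_mul !iterS -/(ec_mul _ _ n _) IH ec_add_scale. Qed.

End WeightedScaling.

Section Cusp.
Variable F : fieldType.

(* On the cusp y^2 = x^3 write p(a) := (a^-2, - a^-3).  The chord through
   p(a) and p(b) (a^2 <> b^2) meets the cusp again at - p(a + b), so that the
   chord law adds parameters.  The slope and coordinates are written exactly
   as [ec_add] computes them with a2 = a4 = 0. *)
Lemma cusp_chord (a b : F) : a != 0 -> b != 0 -> a + b != 0 -> a ^+ 2 != b ^+ 2 ->
  let m := (- b^-1 ^+ 3 - - a^-1 ^+ 3) / (b^-1 ^+ 2 - a^-1 ^+ 2) in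
  let x3 := m ^+ 2 - 0 - a^-1 ^+ 2 - b^-1 ^+ 2 in
  x3 = (a + b)^-1 ^+ 2 /\ - (- a^-1 ^+ 3 + m * (x3 - a^-1 ^+ 2)) = - (a + b)^-1 ^+ 3.
Proof.
move=> a0 b0 ab0 ab2 m x3.
have em : m = - (a ^+ 2 + a * b + b ^+ 2) / (a * b * (a + b)).
  by rewrite /m; field; rewrite ab0 a0 b0 mulN1r subr_eq0 ab2.
have ex3 : x3 = (a + b)^-1 ^+ 2 by rewrite /x3 em; field; rewrite a0 b0 ab0.
by split => //; rewrite ex3 em; field; rewrite a0 b0 ab0.
Qed.

Lemma cusp_tangent (a : F) : a != 0 -> (2 : F) != 0 ->
  let m := (3 * (a^-1 ^+ 2) ^+ 2 + 2 * 0 * a^-1 ^+ 2 + 0) / (2 * - a^-1 ^+ 3) in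
  let x3 := m ^+ 2 - 0 - a^-1 ^+ 2 - a^-1 ^+ 2 in
  x3 = (a + a)^-1 ^+ 2 /\ - (- a^-1 ^+ 3 + m * (x3 - a^-1 ^+ 2)) = - (a + a)^-1 ^+ 3.
Proof.
move=> a0 two0 m x3.
have em : m = - 3 / (2 * a) by rewrite /m; field; rewrite a0 oppr_eq0 two0.
have aa0 : a + a != 0 by rewrite -mulr2n -mulr_natl mulf_neq0.
have ex3 : x3 = (a + a)^-1 ^+ 2 by rewrite /x3 em; field; rewrite aa0 a0 two0.
by split => //; rewrite ex3 em; field; rewrite aa0 a0 two0.
Qed.

End Cusp.

Section CuspReduction.
Context {F : numFieldType}.
Local Notation K := {fraction {poly F}}.

(* A curve y^2 = x^3 + b2 x^2 + b4 x over K = F(t) reducing at t = 0 to the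
   cusp y^2 = x^3.  Characteristic 0 (a numFieldType) keeps the multiples n a
   of a nonzero parameter nonzero. *)
Context {b2 b4 : K}.
Hypotheses (b2_at0 : value_at0 b2 0) (b4_at0 : value_at0 b4 0).

Definition cusp_reduction (P : ec_point K) (a : F) : Prop :=
  a != 0 /\ exists x y, P = Some (x, y) /\
    value_at0 x (a^-1 ^+ 2) /\ value_at0 y (- a^-1 ^+ 3).

(* 2 <> 0 in K, which excludes y = - y for y <> 0 in the doubling formula. *)
Lemma two_neq0 : (2 : K) != 0.
Proof. by apply: (value_at0_neq0 _ (value_at0_nat 2)); rewrite pnatr_eq0. Qed.

(* Reduction commutes with the chord law: x1 <> x2 in K since the reductions
   differ. *)
Lemma cusp_reduction_chord P Q a b : cusp_reduction P a -> cusp_reduction Q b ->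
  a + b != 0 -> a ^+ 2 != b ^+ 2 -> cusp_reduction (ec_add b2 b4 P Q) (a + b).
Proof.
move=> [a0 [x1 [y1 [-> [vx1 vy1]]]]] [b0 [x2 [y2 [-> [vx2 vy2]]]]] ab0 ab2 /=.
have [ex|nx] := eqVneq x1 x2.
  case/eqP: ab2; apply: invr_inj; rewrite -!exprVn.
  by rewrite ex in vx1; apply: value_at0_uniq vx1 vx2.
have dx0 : b^-1 ^+ 2 - a^-1 ^+ 2 != 0.
  by rewrite subr_eq0 !exprVn (inj_eq (@invr_inj _)) eq_sym.
have vm := value_at0M (value_at0B vy2 vy1) (value_at0V dx0 (value_at0B vx2 vx1)).
have vx3 := value_at0B (value_at0B (value_at0B (value_at0X 2 vm) b2_at0) vx1) vx2.
have vy3 := value_at0N (value_at0D vy1 (value_at0M vm (value_at0B vx3 vx1))).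
have [ex3 ey3] := cusp_chord a0 b0 ab0 ab2.
rewrite ex3 in vx3; rewrite ey3 in vy3.
by split=> //; do 2 eexists.
Qed.

Lemma cusp_reduction_double P a : cusp_reduction P a ->
  cusp_reduction (ec_add b2 b4 P P) (a + a).
Proof.
move=> [a0 [x [y [-> [vx vy]]]]] /=.
have two0 : (2 : F) != 0 by rewrite pnatr_eq0.
have y0 : y != 0 by apply: value_at0_neq0 vy; rewrite oppr_eq0 expf_neq0 ?invr_eq0.
have -> : (y == - y) = false.
  by apply/negbTE; rewrite -addr_eq0 -mulr2n -mulr_natr (mulf_neq0 y0 two_neq0).
rewrite eqxx.
have dy0 : 2 * - a^-1 ^+ 3 != 0 by rewrite mulf_neq0 ?oppr_eq0 ?expf_neq0 ?invr_eq0.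
have vm := value_at0M (value_at0D (value_at0D
   (value_at0M (value_at0_nat 3) (value_at0X 2 vx))
   (value_at0M (value_at0M (value_at0_nat 2) b2_at0) vx)) b4_at0)
   (value_at0V dy0 (value_at0M (value_at0_nat 2) vy)).
have vx3 := value_at0B (value_at0B (value_at0B (value_at0X 2 vm) b2_at0) vx) vx.
have vy3 := value_at0N (value_at0D vy (value_at0M vm (value_at0B vx3 vx))).
have [ex3 ey3] := cusp_tangent a0 two0.
rewrite ex3 in vx3; rewrite ey3 in vy3.
split; first by rewrite -mulr2n -mulr_natl mulf_neq0.
by do 2 eexists.
Qed.

Lemma cusp_reduction_mul P a n : cusp_reduction P a -> (0 < n)%N ->
  cusp_reduction (ec_mul b2 b4 n P) (n%:R * a).
Proof.
move=> rP; have a0 : a != 0 by case: rP.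
have ka0 k : (0 < k)%N -> k%:R * a != 0 by move=> k0; rewrite mulf_neq0 ?pnatr_eq0 -?lt0n.
have mul1 : ec_mul b2 b4 1 P = P by case: rP => _ [x [y [-> _]]].
elim: n => [//|[_ _|n IH _]]; first by rewrite mul1 mul1r.
have -> : ec_mul b2 b4 n.+2 P = ec_add b2 b4 P (ec_mul b2 b4 n.+1 P) by [].
rewrite [n.+2%:R]mulrS mulrDl mul1r.
case: n IH => [_|n IH]; first by rewrite mul1 mul1r; apply: cusp_reduction_double.
apply: cusp_reduction_chord (IH isT) _ _ => //.
  by rewrite -{1}(mul1r a) -mulrDl -mulrS ka0.
rewrite exprMn -natrX eq_sym -subr_eq0 -{2}(mul1r (a ^+ 2)) -mulrBl.
by rewrite mulf_neq0 ?expf_neq0 // subr_eq0 pnatr_eq1 -(exp1n 2) eqn_exp2r.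
Qed.

(* A point reducing to a smooth point of the cusp has infinite order:
   n P reduces to the parameter n a <> 0, so n P <> O. *)
Lemma cusp_reduction_not_torsion P a : cusp_reduction P a -> ~ ec_torsion b2 b4 P.
Proof.
move=> rP [n [n0 nP0]].
by have [_ [x [y []]]] := cusp_reduction_mul rP n0; rewrite nP0.
Qed.

End CuspReduction.

Section ScaledCuspReduction.
Context {F : numFieldType}.
Local Notation K := {fraction {poly F}}.
Local Notation t := (@FracField.tofrac {poly F} 'X).

Lemma t_neq0 : t != 0.
Proof. by rewrite tofrac_eq0 polyX_eq0. Qed.

Lemma scaled_cusp_reduction_not_torsion (a2 a4 : K) P a :
  value_at0 (t ^+ 2 * a2) 0 -> value_at0 (t ^+ 4 * a4) 0 ->
  cusp_reduction P a -> ~ ec_torsion a2 a4 (ec_scale t P).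
Proof.
move=> va2 va4 rP [n [n0 nP0]]; apply: (cusp_reduction_not_torsion va2 va4 rP).
exists n; split=> //; move: nP0; rewrite ec_mul_scale ?t_neq0 //.
by case: (ec_mul _ _ n P) => [[]|].
Qed.

End ScaledCuspReduction.

Section BilliardAlgebra.
Context {F : fieldType} {cc s t : F}.
Hypotheses (cc_neq0 : cc != 0) (s_sqr : s ^+ 2 = 1 - cc ^+ 2).
Let lam := (1 - t ^+ 2) / cc ^+ 2.

Lemma one_sub_lam : 1 - cc ^+ 2 * lam = t ^+ 2.
Proof. by rewrite /lam; field; rewrite cc_neq0. Qed.

Lemma billiard_on_legendre : t != 0 ->
  let x := (1 - cc ^+ 2) * lam / (1 - cc ^+ 2 * lam) in
  (cc * s * lam * (1 - lam) / ((1 - cc ^+ 2 * lam) * t)) ^+ 2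
  = x ^+ 3 + - (1 + lam) * x ^+ 2 + lam * x + 0.
Proof.
by move=> t0 x; rewrite /x one_sub_lam !exprMn s_sqr /lam; field; rewrite cc_neq0 t0.
Qed.

Lemma billiard_scaled :
  ((1 - cc ^+ 2) * lam / (1 - cc ^+ 2 * lam),
   cc * s * lam * (1 - lam) / ((1 - cc ^+ 2 * lam) * t))
  = ((1 - cc ^+ 2) * lam / t ^+ 2, cc * s * lam * (1 - lam) / t ^+ 3).
Proof. by rewrite one_sub_lam -exprSr. Qed.

End BilliardAlgebra.

(* At t = 0, i.e. lam = 1/c^2, the point (X, Y) is p(c / s):
   X(0) = (s/c)^2 and Y(0) = -(s/c)^3. *)
Lemma billiard_values (F : fieldType) (cc s : F) :
  cc != 0 -> s != 0 -> s ^+ 2 = 1 - cc ^+ 2 ->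
  let lam0 := (1 - 0 ^+ 2) * (cc ^+ 2)^-1 in
  (1 - cc ^+ 2) * lam0 = (cc / s)^-1 ^+ 2 /\
  cc * s * lam0 * (1 - lam0) = - (cc / s)^-1 ^+ 3.
Proof.
move=> cc0 s0 s_sqr lam0; split; first by rewrite -s_sqr /lam0; field; rewrite cc0 s0.
apply/eqP; rewrite -subr_eq0.
have -> : cc * s * lam0 * (1 - lam0) - - (cc / s)^-1 ^+ 3
        = s / cc ^+ 3 * (s ^+ 2 - (1 - cc ^+ 2)) by rewrite /lam0; field; rewrite cc0 s0.
by rewrite s_sqr subrr mulr0.
Qed.

Section Billiard.
Variables (R : realType) (c : R).
Hypotheses (c_gt0 : 0 < c) (c_lt1 : c < 1).
Local Notation C := R[i].

Let cC : C := (c%:C)%C.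
Let sC : C := ((Num.sqrt (1 - c ^+ 2))%:C)%C.
Let X : Kfield R := (1 - Kconst cC ^+ 2) * Klam c.
Let Y : Kfield R := Kconst cC * Kconst sC * Klam c * (1 - Klam c).

Lemma cC_neq0 : cC != 0.
Proof. by rewrite /cC fmorph_eq0 gt_eqF. Qed.

Lemma sC_neq0 : sC != 0.
Proof. by rewrite /sC fmorph_eq0 gt_eqF // sqrtr_gt0 subr_gt0 expr_lt1 // ltW. Qed.

Lemma sC_sqr : sC ^+ 2 = 1 - cC ^+ 2.
Proof.
rewrite /sC /cC -rmorphXn sqr_sqrtr ?rmorphB ?rmorph1 ?rmorphXn //.
by rewrite subr_ge0 expr_le1 // ltW.
Qed.

Lemma Klam_eq : Klam c = (1 - Kt R ^+ 2) / Kconst cC ^+ 2.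
Proof. by rewrite /Klam /Kconst /cC !rmorphXn. Qed.

Lemma Kconst_cC_neq0 : Kconst cC != 0.
Proof. exact: value_at0_neq0 cC_neq0 (value_at0C _). Qed.

Lemma Kconst_sC_sqr : Kconst sC ^+ 2 = 1 - Kconst cC ^+ 2.
Proof.
have -> : Kconst sC ^+ 2 = Kconst (sC ^+ 2) by rewrite /Kconst !rmorphXn.
by rewrite sC_sqr /Kconst !rmorphB !rmorph1 !rmorphXn.
Qed.

Lemma billiardB_scaled : billiardB c = ec_scale (Kt R) (Some (X, Y)).
Proof.
by rewrite /billiardB /X /Y Klam_eq (billiard_scaled Kconst_cC_neq0).
Qed.

Lemma billiardB_on_legendre : legendre_on (Klam c) (billiardB c).
Proof.
rewrite /legendre_on /billiardB /= Klam_eq.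
exact: billiard_on_legendre Kconst_cC_neq0 Kconst_sC_sqr t_neq0.
Qed.

Let lam0 : C := (1 - 0 ^+ 2) * (cC ^+ 2)^-1.

Lemma Klam_at0 : value_at0 (Klam c) lam0.
Proof.
rewrite Klam_eq; apply: value_at0M (value_at0V _ (value_at0X 2 (value_at0C _))).
  exact: value_at0B value_at0_1 (value_at0X 2 value_at0_t).
by rewrite expf_neq0 ?cC_neq0.
Qed.

Lemma billiard_cusp_reduction : cusp_reduction (Some (X, Y)) (cC / sC).
Proof.
have [eX eY] := billiard_values cC_neq0 sC_neq0 sC_sqr.
split; first by rewrite mulf_neq0 ?invr_eq0 ?cC_neq0 ?sC_neq0.
exists X, Y; split=> //; split; [rewrite -eX | rewrite -eY].
  exact: value_at0M (value_at0B value_at0_1 (value_at0X 2 (value_at0C _))) Klam_at0.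
apply: value_at0M (value_at0B value_at0_1 Klam_at0).
exact: value_at0M (value_at0M (value_at0C _) (value_at0C _)) Klam_at0.
Qed.

Lemma legendre_a2_at0 : value_at0 (Kt R ^+ 2 * - (1 + Klam c)) 0.
Proof.
have := value_at0M (value_at0X 2 value_at0_t) (value_at0N (value_at0D value_at0_1 Klam_at0)).
by rewrite expr0n mul0r.
Qed.

Lemma legendre_a4_at0 : value_at0 (Kt R ^+ 4 * Klam c) 0.
Proof. by have := value_at0M (value_at0X 4 value_at0_t) Klam_at0; rewrite expr0n mul0r. Qed.

End Billiard.

Theorem proposition2p1 (R : realType) (c : R) (hc0 : 0 < c) (hc1 : c < 1) :
  legendre_on (Klam c) (billiardB c) /\ ~ legendre_torsion (Klam c) (billiardB c).
Proof.
split; first exact: billiardB_on_legendre hc0 hc1.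
rewrite /legendre_torsion (billiardB_scaled hc0).
exact: scaled_cusp_reduction_not_torsion (legendre_a2_at0 hc0) (legendre_a4_at0 hc0)
  (billiard_cusp_reduction hc0 hc1).
Qed.
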